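(* Let $G$ be a connected graph of order $n$, maximum degree $\Delta$, and diameter $d$. Then: (i) $\gamma_{e,f}^*(G)\ge \frac{d+3}{6}$; (ii) if $\Delta=3$, then $\gamma_{e,f}^*(G)\ge \frac{n}{2+3d}$; (iii) if $\Delta\ge 4$, then $\gamma_{e,f}^*(G)\ge \left(\dfrac{\frac{\Delta-1}{2}-1}{\Delta\left(\frac{\Delta-1}{2}\right)^d-3}\right)n$.
   Context: All graphs are finite, simple and undirected. The fractional porous exponential domination number $\gamma_{e,f}^*(G)$ is the optimum value of the linear program: minimize $\sum_{u\in V(G)}x(u)$ subject to $\sum_{u\in V(G)}\left(\frac12\right)^{\mathrm{dist}_G(u,v)-1}x(u)\ge 1$ for every $v\in V(G)$ and $x(u)\ge 0$ for every $u\in V(G)$, where $\mathrm{dist}_G$ is the usual graph distance. *)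

From HB Require Import structures.
From mathcomp Require Import all_boot all_order all_algebra.
Set Implicit Arguments. Unset Strict Implicit. Unset Printing Implicit Defensive.
Import Order.TTheory GRing.Theory Num.Theory.
Local Open Scope ring_scope.

Definition simple_graph (T : finType) (e : rel T) : Prop :=
  symmetric e /\ irreflexive e.

Definition connected_graph (T : finType) (e : rel T) : Prop :=
  forall u v : T, connect e u v.

Fixpoint ball (T : finType) (e : rel T) (k : nat) (u : T) : {set T} :=
  match k with
  | 0 => [set u]
  | k'.+1 => ball e k' u :|: [set y | [exists x in ball e k' u, e x y]]
  end.

(* graph distance: least k with v in the k-ball of u (a shortest path in a
   connected graph has fewer than #|T| edges; returns #|T| if unreachable). *)
Definition gdist (T : finType) (e : rel T) (u v : T) : nat :=
  find (fun k => v \in ball e k u) (iota 0 #|T|)%N.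

Definition diameter (T : finType) (e : rel T) : nat :=
  (\max_(u : T) \max_(v : T) gdist e u v)%N.

Definition max_degree (T : finType) (e : rel T) : nat :=
  (\max_(v : T) #|[set w | e v w]|)%N.

Definition pweight (R : realFieldType) (T : finType) (e : rel T) (u v : T) : R :=
  ((2%:R : R)^-1) ^ ((gdist e u v)%:Z - 1).

(* feasible solutions of the LP defining gamma*_{e,f} *)
Definition fpe_feasible (R : realFieldType) (T : finType) (e : rel T)
  (x : T -> R) : Prop :=
  (forall u, 0 <= x u) /\
  (forall v, 1 <= \sum_(u : T) pweight R e u v * x u).

From HB Require Import structures.
From mathcomp Require Import all_boot all_order all_algebra.
From mathcomp Require Import zify ring lra.
Import Order.TTheory GRing.Theory Num.Theory.
Set Implicit Arguments. Unset Strict Implicit. Unset Printing Implicit Defensive.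

(* Summing the covering constraints of the vertices of a sequence s and
   exchanging the sums gives size s <= B * gamma as soon as every vertex u has
   \sum_(v <- s) (1/2)^(dist(u,v) - 1) <= B.

   For (ii) and (iii) take s = V: at most Delta (Delta-1)^(k-1) vertices lie at
   distance k from u, so B = 2 + \sum_(k < d) Delta ((Delta-1)/2)^k, a geometric
   sum which is 2 + 3d when Delta = 3.

   For (i) take s = v_0, v_d, v_0, ..., v_d along a diametral path.  The
   distances a_i = dist(u, v_i) satisfy j - i <= a_i + a_j, and for any such
   profile \sum_i (1/2)^a_i + (1/2)^a_0 + (1/2)^a_d <= 3, so B = 6 and
   d + 3 <= 6 gamma.  The profile inequality follows by writing each (1/2)^a as
   a sum of layers (1/2)^(k+1) over k >= a and telescoping against a potential
   c with c_0 = 3 and N_k + c_(k+1) <= 2 c_k, where N_k counts the entries a_i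
   (with a_0 and a_d counted twice) that are at most k. *)

Section Balls.
Variables (T : finType) (e : rel T).

Lemma in_ball0 u v : (v \in ball e 0 u) = (v == u).
Proof. by rewrite /= inE. Qed.

Lemma in_ballS k u y :
  (y \in ball e k.+1 u) = (y \in ball e k u) || [exists x in ball e k u, e x y].
Proof. by rewrite /= !inE. Qed.

Lemma ball_mono k l u : (k <= l)%N -> {subset ball e k u <= ball e l u}.
Proof.
move=> kl; elim: l kl => [|l IH]; first by rewrite leqn0 => /eqP ->.
rewrite leq_eqVlt => /orP [/eqP -> //| kl] y /(IH kl) yk.
by rewrite in_ballS yk.
Qed.

Lemma ball_edge k u x y : x \in ball e k u -> e x y -> y \in ball e k.+1 u.
Proof.
by move=> xk exy; rewrite in_ballS; apply/orP; right; apply/existsP; exists x; rewrite xk.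
Qed.

Lemma ball_trans k l x y z :
  y \in ball e k x -> z \in ball e l y -> z \in ball e (k + l) x.
Proof.
move=> yk; elim: l z => [|l IH] z; first by rewrite in_ball0 addn0 => /eqP ->.
rewrite in_ballS => /orP [/IH zk|/existsP [w /andP [wl ewz]]].
  by apply: (ball_mono _ zk); rewrite addnS.
by rewrite addnS; apply: ball_edge (IH _ wl) ewz.
Qed.

Lemma ball_sym k u v : symmetric e -> v \in ball e k u -> u \in ball e k v.
Proof.
move=> se; elim: k u v => [|k IH] u v; first by rewrite !in_ball0 eq_sym.
rewrite in_ballS => /orP [/IH vk|/existsP [x /andP [xk exv]]].
  exact: (ball_mono (leqnSn k)).
have vx : x \in ball e 1 v by apply: (ball_edge (k := 0)); rewrite ?in_ball0 // se.
by rewrite -add1n; apply: ball_trans vx (IH _ _ xk).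
Qed.

(* A shortest walk visits no vertex twice, hence has fewer than #|T| edges. *)
Lemma connect_ball u v : connect e u v -> v \in ball e #|T|.-1 u.
Proof.
move/connectP=> [p0 pp0 ->]; case: (shortenP pp0) => p pp up _.
have sz : (size p <= #|T|.-1)%N.
  by have := max_card (mem (u :: p)); rewrite (card_uniqP up) /=; lia.
apply: (ball_mono sz); elim/last_ind: p pp {up sz} => [|p y IH] /=.
  by rewrite in_ball0.
rewrite rcons_path => /andP [pp ey]; rewrite last_rcons size_rcons.
exact: ball_edge (IH pp) ey.
Qed.

Lemma gdist_le_diameter u v : (gdist e u v <= diameter e)%N.
Proof.
apply: leq_trans (leq_bigmax (F := fun v => gdist e u v) v) _.
exact: (leq_bigmax (F := fun u => \max_v gdist e u v)%N u).
Qed.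

Hypothesis conn : connected_graph e.

Lemma gdist_ball u v : (gdist e u v < #|T|)%N /\ v \in ball e (gdist e u v) u.
Proof.
have T0 : (0 < #|T|)%N by apply/card_gt0P; exists u.
have reach : has (fun k => v \in ball e k u) (iota 0 #|T|).
  apply/hasP; exists #|T|.-1; first by rewrite mem_iota; lia.
  exact: connect_ball (conn u v).
have lt : (gdist e u v < #|T|)%N by rewrite -[X in (_ < X)%N](size_iota 0) -has_find.
by split=> //; have := nth_find 0 reach; rewrite nth_iota.
Qed.

Lemma in_ballE k u v : (v \in ball e k u) = (gdist e u v <= k)%N.
Proof.
have [lt uv] := gdist_ball u v.
apply/idP/idP => [vk|]; last by move/ball_mono; apply.
rewrite leqNgt; apply/negP => kd.
have := before_find 0 kd; rewrite nth_iota ?add0n ?vk //.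
exact: ltn_trans kd lt.
Qed.

Lemma gdist_triangle u v w : (gdist e u w <= gdist e u v + gdist e v w)%N.
Proof. by rewrite -in_ballE; apply: (ball_trans (y := v)); rewrite in_ballE. Qed.

Lemma gdist_eq0 u v : (gdist e u v == 0%N) = (u == v).
Proof. by rewrite -leqn0 -in_ballE in_ball0 eq_sym. Qed.

Lemma gdist_edge u x y : e x y -> (gdist e u y <= (gdist e u x).+1)%N.
Proof. by move=> exy; rewrite -in_ballE; apply: ball_edge exy; rewrite in_ballE. Qed.

Lemma gdist_prev u v k : gdist e u v = k.+1 -> exists x, gdist e u x = k /\ e x v.
Proof.
move=> uv; have : v \in ball e k.+1 u by rewrite in_ballE uv.
rewrite in_ballS in_ballE uv ltnn /= => /existsP [x /andP [xk exv]].
exists x; split=> //; apply/eqP; rewrite eqn_leq -in_ballE xk /=.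
by rewrite -ltnS -uv gdist_edge.
Qed.

Lemma gdist_intermediate u v i : (i <= gdist e u v)%N -> exists x, gdist e u x = i.
Proof.
suff gen m w : gdist e u w = m -> (i <= m)%N -> exists x, gdist e u x = i.
  exact: gen.
elim: m w => [|m IH] w uw; first by rewrite leqn0 => /eqP ->; exists w.
rewrite leq_eqVlt => /orP [/eqP ->|]; first by exists w.
by rewrite ltnS; have [x [ux _]] := gdist_prev uw; apply: IH ux.
Qed.

Lemma gdistC : symmetric e -> forall u v, gdist e u v = gdist e v u.
Proof.
move=> se u v; apply/eqP; rewrite eqn_leq -!in_ballE.
by apply/andP; split; apply: ball_sym => //; rewrite in_ballE.
Qed.

End Balls.

(* [a i] stands for the distance from a fixed vertex to the i-th vertex of a
   geodesic of length d. *)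
Definition geodesic_profile (a : nat -> nat) (d : nat) : Prop :=
  forall i j, (i <= d)%N -> (j <= d)%N -> (j - i <= a i + a j)%N.

Lemma diameter_profile (T : finType) (e : rel T) :
  connected_graph e -> symmetric e -> (0 < #|T|)%N ->
  exists w : nat -> T, forall u, geodesic_profile (fun i => gdist e u (w i)) (diameter e).
Proof.
move=> conn se T0.
have [u0 ecc_u0] := @bigop.eq_bigmax T (fun u => \max_v gdist e u v)%N T0.
have [v0 u0v0] := @bigop.eq_bigmax T (fun v => gdist e u0 v) T0.
have dv0 : gdist e u0 v0 = diameter e by rewrite /diameter ecc_u0 u0v0.
pose w i := odflt u0 [pick y | gdist e u0 y == i].
have u0w i : (i <= diameter e)%N -> gdist e u0 (w i) = i.
  rewrite -dv0 => /(gdist_intermediate conn) [y u0y].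
  by rewrite /w; case: pickP => [z /eqP //|/(_ y)]; rewrite u0y eqxx.
exists w => u i j id jd.
have := gdist_triangle conn u0 (w i) (w j).
have := gdist_triangle conn (w i) u (w j).
by rewrite (gdistC conn se (w i) u) u0w // u0w //; lia.
Qed.

Lemma count_iota_window (P : pred nat) n lo w :
  (forall i, (i < n)%N -> P i -> (lo <= i <= lo + w)%N) ->
  (count P (iota 0 n) <= w.+1)%N.
Proof.
move=> win; rewrite -size_filter -[w.+1](size_iota lo).
apply: uniq_leq_size; first by rewrite filter_uniq // iota_uniq.
move=> i; rewrite mem_filter mem_iota add0n => /andP [Pi iN].
by have := win i iN Pi; rewrite mem_iota; lia.
Qed.

Lemma count_iota_span (P : pred nat) n w :
  (forall i j, (i < n)%N -> (j < n)%N -> P i -> P j -> (j - i <= w)%N) ->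
  (count P (iota 0 n) <= w.+1)%N.
Proof.
move=> span; have [|] := boolP (has P (iota 0 n)); last by rewrite has_count; lia.
move=> /hasP [i]; rewrite mem_iota add0n leq0n /= => iN Pi.
have ex_i : exists i, (i < n) && P i by exists i; rewrite iN Pi.
have [m /andP [mN Pm] min_m] := ex_minnP ex_i.
apply: (count_iota_window (lo := m)) => j jN Pj.
by have := min_m j; rewrite jN Pj => /(_ isT); have := span m j mN jN Pm Pj; lia.
Qed.

(* The three terms mirror the bounds 2k+1, k + min (a 0) (a d) + 1 and d+1 on
   the number of i <= d with a i <= k. *)
Definition profile_potential (a : nat -> nat) (d k : nat) : nat :=
  minn (2 * k + 3) (minn (k + minn (a 0%N) (a d) + 3) (d + 3)).

Lemma profile_count_step a d k : geodesic_profile a d ->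
  ((a 0%N <= k) + (a d <= k) + count (fun i => a i <= k) (iota 0 d.+1)
     + profile_potential a d k.+1 <= (profile_potential a d k).*2)%N.
Proof.
move=> pa; set C := count (fun i => a i <= k) (iota 0 d.+1).
have C_span : (C <= (2 * k).+1)%N.
  by apply: count_iota_span => i j iN jN Pi Pj; have := pa i j iN jN; lia.
have C_size : (C <= d.+1)%N by rewrite -[X in (_ <= X)%N](size_iota 0) count_size.
have C_left : (a 0%N <= k -> C <= (k + a 0%N).+1)%N.
  move=> a0k; apply: (count_iota_window (lo := 0)) => i iN Pi.
  by have := pa 0%N i (leq0n _) iN; lia.
have C_right : (a d <= k -> C <= (k + a d).+1)%N.
  move=> adk; apply: (count_iota_window (lo := d - (k + a d))) => i iN Pi.
  by have := pa i d iN (leqnn _); lia.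
have ad := pa 0%N d (leq0n _) (leqnn _).
rewrite /profile_potential; clearbody C; clear pa.
case: (leqP (a 0%N) k) => a0k; case: (leqP (a d) k) => adk /=.
- by have := C_left a0k; have := C_right adk; lia.
- by have := C_left a0k; lia.
- by have := C_right adk; lia.
- lia.
Qed.

Section HalfPowers.
Variable R : realFieldType.
Local Open Scope ring_scope.
Let h : R := 2^-1.

Let h_ge0 : 0 <= h. Proof. by rewrite /h invr_ge0 ler0n. Qed.

Lemma halfX_layers (x K : nat) : (x <= K)%N ->
  h ^+ x = \sum_(k < K) h ^+ k.+1 * (x <= k)%:R + h ^+ K.
Proof.
elim: K => [|K IH]; first by rewrite leqn0 => /eqP ->; rewrite big_ord0 add0r.
rewrite leq_eqVlt => /orP [/eqP ->|xK].
  by rewrite big1 ?add0r // => k _; rewrite leqNgt ltn_ord mulr0.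
rewrite ltnS in xK; rewrite IH // big_ord_recr /= xK mulr1 -addrA; congr (_ + _).
by rewrite exprS /h; field.
Qed.

Lemma sum_halfX_layers (L : seq nat) (K : nat) : all (fun x => x <= K)%N L ->
  \sum_(x <- L) h ^+ x =
  \sum_(k < K) h ^+ k.+1 * (count (fun x => x <= k)%N L)%:R + (size L)%:R * h ^+ K.
Proof.
elim: L => [|x L IH] /=.
  by rewrite big_nil big1 ?add0r ?mul0r // => k _; rewrite mulr0.
move=> /andP [xK LK]; rewrite big_cons IH // (halfX_layers xK) addrACA.
congr (_ + _); last by rewrite -add1n natrD mulrDl mul1r.
by rewrite -big_split; apply: eq_bigr => k _; rewrite natrD mulrDr.
Qed.

Lemma potential_bound (M c : nat -> nat) (K : nat) :
  c 0%N = 3%N -> (forall k, M k + c k.+1 <= (c k).*2)%N ->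
  \sum_(k < K) h ^+ k.+1 * (M k)%:R + (c K)%:R * h ^+ K <= 3.
Proof.
move=> c0 Mc; elim: K => [|K IH]; first by rewrite big_ord0 add0r c0 mulr1.
apply: le_trans IH; rewrite big_ord_recr -addrA lerD2l.
have -> : h ^+ K.+1 * (M K)%:R + (c K.+1)%:R * h ^+ K.+1 = h ^+ K.+1 * (M K + c K.+1)%:R.
  by rewrite natrD; ring.
have -> : (c K)%:R * h ^+ K = h ^+ K.+1 * (c K).*2%:R.
  by rewrite -muln2 natrM exprS /h; field.
by rewrite ler_wpM2l ?exprn_ge0 // ler_nat.
Qed.

Lemma profile_halfX_le3 (a : nat -> nat) (d : nat) : geodesic_profile a d ->
  \sum_(i < d.+1) h ^+ a i + h ^+ a 0%N + h ^+ a d <= 3.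
Proof.
move=> pa.
set L := [:: a 0%N, a d & [seq a i | i <- iota 0 d.+1]].
have sumL : \sum_(x <- L) h ^+ x = \sum_(i < d.+1) h ^+ a i + h ^+ a 0%N + h ^+ a d.
  by rewrite 2!big_cons big_map -[iota 0 d.+1]/(index_iota 0 d.+1) big_mkord; ring.
set K := (d + sumn L)%N.
have LK : all (fun x => x <= K)%N L.
  apply/allP => x xL; apply: leq_trans (leq_addl d _).
  by elim: (L) xL => [|y l IH] //=; rewrite inE => /orP [/eqP ->|/IH]; lia.
rewrite -sumL (sum_halfX_layers LK).
apply: le_trans (potential_bound (M := fun k => count (fun x => x <= k)%N L)
  (c := profile_potential a d) K _ _).
- rewrite lerD2l ler_wpM2r ?exprn_ge0 // ler_nat /= size_map size_iota.
  by rewrite /profile_potential /K; lia.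
- by rewrite /profile_potential; lia.
- by move=> k; rewrite /L /= count_map addnA; apply: profile_count_step.
Qed.

End HalfPowers.

Local Open Scope ring_scope.

Lemma pweightE (R : realFieldType) (T : finType) (e : rel T) u v :
  pweight R e u v = 2 * 2^-1 ^+ gdist e u v.
Proof.
rewrite /pweight expfzDr ?invr_eq0 ?pnatr_eq0 // exprN1 invrK mulrC.
by rewrite -exprnP.
Qed.

Lemma leq_card_bigcup (T I : finType) (P : pred I) (F : I -> {set T}) :
  (#|\bigcup_(i | P i) F i| <= \sum_(i | P i) #|F i|)%N.
Proof.
apply: (big_ind2 (fun (A : {set T}) n => #|A| <= n)%N) => //; first by rewrite cards0.
by move=> A m B n Am Bn; apply: leq_trans (leq_card_setU A B) (leq_add Am Bn).
Qed.

Section Layers.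
Variables (T : finType) (e : rel T).

Lemma card_nbhd_le_max_degree v : (#|[set w | e v w]| <= max_degree e)%N.
Proof. exact: (leq_bigmax (F := fun v => #|[set w | e v w]|)). Qed.

Hypotheses (conn : connected_graph e) (se : symmetric e).

Definition layer u k := [set v | gdist e u v == k].

Lemma card_layer0 u : #|layer u 0| = 1%N.
Proof. by rewrite -(cards1 u); apply: eq_card => v; rewrite !inE gdist_eq0 // eq_sym. Qed.

Lemma card_layer1 u : (#|layer u 1| <= max_degree e)%N.
Proof.
apply: leq_trans (card_nbhd_le_max_degree u); apply: subset_leq_card.
apply/subsetP => v; rewrite !inE => /eqP /(gdist_prev conn) [x [/eqP ux ex]].
by move: ux; rewrite gdist_eq0 // => /eqP ->.
Qed.

(* Each vertex of layer k+1 has a neighbour in layer k, so at most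
   max_degree - 1 of its neighbours lie in layer k+2. *)
Lemma card_layerS u k :
  (#|layer u k.+2| <= #|layer u k.+1| * (max_degree e).-1)%N.
Proof.
rewrite -sum_nat_const.
apply: (@leq_trans #|\bigcup_(x in layer u k.+1) ([set w | e x w] :&: layer u k.+2)|).
  apply: subset_leq_card; apply/subsetP => v; rewrite inE => /eqP uv.
  have [x [ux ex]] := gdist_prev conn uv.
  by apply/bigcupP; exists x; rewrite !inE ?ux ?ex //= -uv.
apply: leq_trans (leq_card_bigcup _ _) _; apply: leq_sum => x; rewrite inE => /eqP ux.
have [y [uy ey]] := gdist_prev conn ux.
have yx : y \in [set w | e x w] by rewrite inE se.
apply: (@leq_trans #|[set w | e x w] :\ y|).
  apply: subset_leq_card; apply/subsetP => w; rewrite !inE => /andP [xw /eqP uw].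
  by rewrite xw andbT; apply/eqP => wy; move: uw; rewrite wy uy; lia.
have := cardsD1 y [set w | e x w]; rewrite yx.
by have := card_nbhd_le_max_degree x; lia.
Qed.

Lemma card_layer_le u k :
  (#|layer u k.+1| <= max_degree e * (max_degree e).-1 ^ k)%N.
Proof.
elim: k => [|k IH]; first by rewrite muln1 card_layer1.
apply: leq_trans (card_layerS u k) _; rewrite expnS mulnCA [X in (_ <= X)%N]mulnC.
exact: leq_mul.
Qed.

Lemma sum_pweight_le (R : realFieldType) u d :
  (1 <= max_degree e)%N -> (forall v, gdist e u v <= d)%N ->
  \sum_v pweight R e u v
    <= 2 + \sum_(k < d) (max_degree e)%:R * (((max_degree e)%:R - 1) / 2) ^+ k.
Proof.
move=> D1 ud; set h : R := 2^-1.
have -> : \sum_v pweight R e u v = \sum_(j < d.+1) #|layer u j|%:R * (2 * h ^+ j).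
  rewrite (partition_big (fun v => inord (gdist e u v) : 'I_d.+1) xpredT) //=.
  apply: eq_bigr => j _; rewrite mulr_natl -sumr_const.
  apply: eq_big => [v|v /eqP <-]; last by rewrite pweightE inordK // ltnS.
  by rewrite inE -(inj_eq val_inj) /= inordK // ltnS.
rewrite big_ord_recl card_layer0 mul1r mulr1 lerD2l; apply: ler_sum => j _.
have -> : ((max_degree e)%:R - 1) / 2 = (max_degree e).-1%:R * h :> R.
  by rewrite -{1}(prednK D1) -natr1 addrK.
rewrite lift0; have -> : 2 * h ^+ j.+1 = h ^+ j by rewrite exprS mulrA /h mulfV ?pnatr_eq0 ?mul1r.
rewrite exprMn mulrA -natrX -natrM ler_wpM2r ?exprn_ge0 ?invr_ge0 ?ler0n //.
by rewrite ler_nat card_layer_le.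
Qed.

End Layers.

Section FeasibleSolutions.
Variables (R : realFieldType) (T : finType) (e : rel T) (x : T -> R).
Hypothesis feas : fpe_feasible e x.

Lemma fpe_size_le (s : seq T) (B : R) :
  (forall u, \sum_(v <- s) pweight R e u v <= B) -> (size s)%:R <= B * \sum_u x u.
Proof.
have [x_ge0 cover] := feas; move=> sB.
apply: (@le_trans _ _ (\sum_(v <- s) \sum_u pweight R e u v * x u)).
  by rewrite -sum1_size natr_sum; apply: ler_sum => v _; apply: cover.
rewrite exchange_big mulr_sumr; apply: ler_sum => u _.
by rewrite -mulr_suml ler_wpM2r.
Qed.

Lemma fpe_diameter_bound :
  connected_graph e -> symmetric e -> (0 < #|T|)%N ->
  ((diameter e)%:R + 3) / 6 <= \sum_u x u.
Proof.
move=> conn se T0; have [w pw] := diameter_profile conn se T0.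
set d := diameter e; set s := [:: w 0%N, w d & [seq w i | i <- iota 0 d.+1]].
have size_s : size s = (d + 3)%N by rewrite /= size_map size_iota addn3.
rewrite ler_pdivrMr // mulrC -natrD -size_s; apply: fpe_size_le => u.
rewrite 2!big_cons big_map -[iota 0 d.+1]/(index_iota 0 d.+1) big_mkord.
under eq_bigr do rewrite pweightE.
by rewrite -mulr_sumr !pweightE; have := profile_halfX_le3 R (pw u); lra.
Qed.

Lemma fpe_max_degree_bound :
  connected_graph e -> symmetric e -> (1 <= max_degree e)%N ->
  #|T|%:R <= (2 + \sum_(k < diameter e)
     (max_degree e)%:R * (((max_degree e)%:R - 1) / 2) ^+ k) * \sum_u x u.
Proof.
move=> conn se D1; rewrite cardE; apply: fpe_size_le => u; rewrite big_enum.
by apply: sum_pweight_le => // v; apply: gdist_le_diameter.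
Qed.

End FeasibleSolutions.

Lemma degree_weight_closed_form (R : realFieldType) (D d : nat) :
  let r := ((D%:R - 1) / 2 : R) in
  (r - 1) * (2 + \sum_(k < d) D%:R * r ^+ k) = D%:R * r ^+ d - 3.
Proof. by move=> r; rewrite -mulr_sumr mulrDr mulrCA -subrX1 /r; field. Qed.

Theorem mainTheorem6 (R : realFieldType) (T : finType) (e : rel T) :
  simple_graph e -> connected_graph e -> (0 < #|T|)%N ->
  let n := #|T| in
  let D := max_degree e in
  let d := diameter e in
  forall x : T -> R, fpe_feasible e x ->
  let g := \sum_(u : T) x u in
  [/\ ((d%:R + 3) / 6 <= g),
      (D = 3%N -> n%:R / (2 + 3 * d%:R) <= g) &
      ((4 <= D)%N ->
        (((D%:R - 1) / 2 - 1) / (D%:R * ((D%:R - 1) / 2) ^+ d - 3)) * n%:R <= g)].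
Proof.
move=> [se _] conn T0 n D d x feas g.
have nB D1 := fpe_max_degree_bound feas conn se D1; rewrite -/D -/d -/g in nB.
split; first exact: fpe_diameter_bound.
- move=> D3; move: nB; rewrite D3 => /(_ isT).
  have -> : ((3 : R) - 1) / 2 = 1 by field.
  rewrite (eq_bigr (fun _ => 3)) => [|k _]; last by rewrite expr1n mulr1.
  rewrite sumr_const card_ord -[3 *+ d]mulr_natr => nle.
  have B0 : 0 < 2 + 3 * d%:R :> R by rewrite ltr_wpDr ?mulr_ge0 ?ler0n.
  by rewrite ler_pdivrMr // mulrC.
- move=> D4; have := nB (leq_trans (isT : (1 <= 4)%N) D4).
  rewrite -(degree_weight_closed_form R D d); set r := ((D%:R - 1) / 2 : R).
  set B := 2 + _ => nle.
  have r1 : 1 < r by have := ler_nat R 4 D; rewrite D4 /r; lra.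
  have B0 : 0 < B.
    by rewrite ltr_wpDr // sumr_ge0 // => k _; rewrite mulr_ge0 ?ler0n ?exprn_ge0 //; lra.
  rewrite invfM mulrA mulfV ?mul1r ?subr_eq0 ?gt_eqF // mulrC.
  by rewrite ler_pdivrMr // mulrC.
Qed.
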